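(* Let a group $G$ act faithfully and uniformly equicontinuously on a cofinite graph $\Gamma$, let $I$ be a fundamental system of $G$-invariant compatible cofinite entourages of $\Gamma$, let $\widehat{\Gamma}=\varprojlim_{R\in I}\Gamma/R$ and $\widehat{G}=\varprojlim_{R\in I}G/N_R$, with $\widehat{G}$ acting on $\widehat{\Gamma}$ by $(N_R[g_R])_R\cdot(R[x_R])_R=(R[g_R\cdot x_R])_R$. For $R\in I$ let $\overline{R}$ be the closure of $R$ in $\widehat{\Gamma}\times\widehat{\Gamma}$, let $\overline{N_R}$ be the closure of $N_R$ in $\widehat{G}\times\widehat{G}$, and let $N_{\overline R}=\{(g,h)\in\widehat{G}\times\widehat{G}:(g\cdot x,h\cdot x)\in\overline{R}\text{ for all }x\in\widehat{\Gamma}\}$. Then $\Phi_1=\{N_{\overline R}\mid R\in I\}$ and $\Phi_2=\{\overline{N_R}\mid R\in I\}$ are fundamental systems of cofinite congruences on $\widehat{G}$ defining equivalent uniformities on $\widehat{G}$.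
   Context: A graph $\Gamma$ is a set $\Gamma=V(\Gamma)\sqcup E(\Gamma)$ with maps $s,t\colon E\to V$ and a fixed-point-free involution $e\mapsto\overline e$ with $s(\overline e)=t(e)$, $t(\overline e)=s(e)$. An equivalence relation $R$ on $\Gamma$ is compatible if $R\subseteq (V\times V)\cup(E\times E)$, $(e,e')\in R$ implies $(s(e),s(e')),(t(e),t(e')),(\overline e,\overline{e'})\in R$, and $(e,\overline e)\notin R$. A cofinite entourage is an entourage that is an equivalence relation with finitely many classes; a cofinite congruence on a group is a cofinite equivalence relation $N$ with $(a,b),(c,d)\in N\Rightarrow(ac,bd)\in N$. A cofinite graph is a graph with a Hausdorff uniformity in which compatible cofinite entourages form a fundamental system. A group $G$ acts on $\Gamma$ if it acts on the set $\Gamma$ preserving vertices and edges, commuting with $s,t,\overline{\phantom e}$, and there is a $G$-invariant orientation. The action is uniformly equicontinuous if for each entourage $W$ there is an entourage $V$ with $(g\times g)[V]\subseteq W$ for all $g\in G$; it is faithful if every $g\ne 1$ moves some point. $R$ is $G$-invariant if $(g\times g)[R]\subseteq R$ for all $g$. $N_R=\{(g,h)\in G\times G:(g\cdot x,h\cdot x)\in R\ \forall x\in\Gamma\}$, a cofinite congruence on $G$; $G$ carries the uniformity with fundamental system $\{N_R: R\in I\}$, and $\widehat G$, $\widehat\Gamma$ are the corresponding completions, with $G\subseteq\widehat G$ and $\Gamma\subseteq\widehat\Gamma$. *)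

From Stdlib Require Import List.
Import ListNotations.
Set Implicit Arguments.

Definition hrel (T : Type) := T -> T -> Prop.
Definition subrel {T} (R S : hrel T) : Prop := forall x y, R x y -> S x y.

Record Group := {
  gcar :> Type;
  gmul : gcar -> gcar -> gcar;
  gone : gcar;
  ginv : gcar -> gcar;
  gmulA : forall a b c, gmul a (gmul b c) = gmul (gmul a b) c;
  gmul1l : forall a, gmul gone a = a;
  gmulVl : forall a, gmul (ginv a) a = gone
}.

(** Graph: a set Gamma = V ⊔ E ; [isV x] means x is a vertex, otherwise an
    edge. [src], [tgt], [gbar] are only meaningful on edges. *)
Record Graph := {
  gpt :> Type;
  isV : gpt -> Prop;
  src : gpt -> gpt;
  tgt : gpt -> gpt;
  gbar : gpt -> gpt;
  src_V : forall e, ~ isV e -> isV (src e);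
  tgt_V : forall e, ~ isV e -> isV (tgt e);
  bar_E : forall e, ~ isV e -> ~ isV (gbar e);
  bar_inv : forall e, ~ isV e -> gbar (gbar e) = e;
  bar_nofix : forall e, ~ isV e -> gbar e <> e;
  src_bar : forall e, ~ isV e -> src (gbar e) = tgt e;
  tgt_bar : forall e, ~ isV e -> tgt (gbar e) = src e
}.

Arguments isV {g} _.
Arguments src {g} _.
Arguments tgt {g} _.
Arguments gbar {g} _.
Arguments gmul {g} _ _.
Arguments gone : clear implicits.
Arguments ginv {g} _.

Definition isE {X : Graph} (x : X) : Prop := ~ isV x.

Definition is_equiv {T} (R : hrel T) : Prop :=
  (forall x, R x x) /\ (forall x y, R x y -> R y x) /\
  (forall x y z, R x y -> R y z -> R x z).

Definition finitely_many_classes {T} (R : hrel T) : Prop :=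
  exists reps : list T, forall x, exists r, In r reps /\ R x r.

Definition compatible {X : Graph} (R : hrel X) : Prop :=
  is_equiv R /\
  (forall x y, R x y -> (isV x /\ isV y) \/ (isE x /\ isE y)) /\
  (forall e e', isE e -> isE e' -> R e e' ->
     R (src e) (src e') /\ R (tgt e) (tgt e') /\ R (gbar e) (gbar e')) /\
  (forall e, isE e -> ~ R e (gbar e)).

Definition is_uniformity {T} (U : hrel T -> Prop) : Prop :=
  (exists W, U W) /\
  (forall W W', U W -> subrel W W' -> U W') /\
  (forall W1 W2, U W1 -> U W2 -> U (fun x y => W1 x y /\ W2 x y)) /\
  (forall W x, U W -> W x x) /\
  (forall W, U W -> U (fun x y => W y x)) /\
  (forall W, U W -> exists V, U V /\
      subrel (fun x z => exists y, V x y /\ V y z) W).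

Definition hausdorff {T} (U : hrel T -> Prop) : Prop :=
  forall x y, (forall W, U W -> W x y) -> x = y.

Definition cofinite_entourage {T} (U : hrel T -> Prop) (R : hrel T) : Prop :=
  U R /\ is_equiv R /\ finitely_many_classes R.

Definition cofinite_graph {X : Graph} (U : hrel X -> Prop) : Prop :=
  is_uniformity U /\ hausdorff U /\
  (forall W, U W -> exists R, cofinite_entourage U R /\ compatible R /\ subrel R W).

(** Group action on a graph (with a G-invariant orientation). *)
Definition graph_action {G : Group} {X : Graph} (act : G -> X -> X) : Prop :=
  (forall x, act (gone G) x = x) /\
  (forall g h x, act (gmul g h) x = act g (act h x)) /\
  (forall g x, isV (act g x) <-> isV x) /\
  (forall g e, isE e ->
     act g (src e) = src (act g e) /\ act g (tgt e) = tgt (act g e) /\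
     act g (gbar e) = gbar (act g e)) /\
  (exists O : X -> Prop,
     (forall e, O e -> isE e) /\
     (forall e, isE e -> (O e \/ O (gbar e)) /\ ~ (O e /\ O (gbar e))) /\
     (forall g e, O e -> O (act g e))).

Definition unif_equicontinuous {G : Group} {X : Graph} (U : hrel X -> Prop)
    (act : G -> X -> X) : Prop :=
  forall W, U W -> exists V, U V /\
    forall g x y, V x y -> W (act g x) (act g y).

Definition faithful_action {G : Group} {X : Graph} (act : G -> X -> X) : Prop :=
  forall g, g <> gone G -> exists x, act g x <> x.

Definition G_invariant {G : Group} {X : Graph} (act : G -> X -> X) (R : hrel X) :=
  forall g x y, R x y -> R (act g x) (act g y).

Definition inv_fund_system {G : Group} {X : Graph} (U : hrel X -> Prop)
    (act : G -> X -> X) (I : hrel X -> Prop) : Prop :=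
  (forall R, I R -> cofinite_entourage U R /\ compatible R /\ G_invariant act R) /\
  (forall W, U W -> exists R, I R /\ subrel R W).

Definition NR {G : Group} {X : Graph} (act : G -> X -> X) (R : hrel X) : hrel G :=
  fun g h => forall x, R (act g x) (act h x).

(** A point of hat Gamma = lim_{R in I} Gamma/R is given by a
    family of representatives (x_R)_R, i.e. the point (R[x_R])_R; two families
    represent the same point iff they agree modulo every R in I.  Likewise for
    hat G = lim_{R in I} G/N_R.  Indices are the relations R in I, ordered by
    inclusion (R ⊆ S gives the projection Gamma/R -> Gamma/S). *)
Definition hatGamma (X : Graph) := hrel X -> X.
Definition hatG (G : Group) (X : Graph) := hrel X -> G.

Definition valid_hatGamma {X : Graph} (I : hrel X -> Prop) (xi : hatGamma X) :=
  forall R S, I R -> I S -> subrel R S -> S (xi R) (xi S).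

Definition valid_hatG {G : Group} {X : Graph} (act : G -> X -> X)
    (I : hrel X -> Prop) (gam : hatG G X) :=
  forall R S, I R -> I S -> subrel R S -> NR act S (gam R) (gam S).

Definition hatmul {G : Group} {X : Graph} (a b : hatG G X) : hatG G X :=
  fun R => gmul (a R) (b R).

Definition hatact {G : Group} {X : Graph} (act : G -> X -> X)
    (gam : hatG G X) (xi : hatGamma X) : hatGamma X :=
  fun R => act (gam R) (xi R).

(** Closure of R ⊆ Gamma×Gamma (embedded via x |-> (R[x])_R) in
    hat Gamma × hat Gamma for the inverse-limit (product) topology: every
    basic neighbourhood (finitely many coordinates fixed, in each factor)
    of (xi, eta) contains the image of a pair of R. *)
Definition closure_hatGamma {X : Graph} (I : hrel X -> Prop) (R : hrel X)
    : hrel (hatGamma X) :=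
  fun xi eta => forall Ts : list (hrel X), (forall T, In T Ts -> I T) ->
    exists x y, R x y /\ forall T, In T Ts -> T x (xi T) /\ T y (eta T).

Definition N_Rbar {G : Group} {X : Graph} (act : G -> X -> X)
    (I : hrel X -> Prop) (R : hrel X) : hrel (hatG G X) :=
  fun gam del => forall xi, valid_hatGamma I xi ->
    closure_hatGamma I R (hatact act gam xi) (hatact act del xi).

(** Closure of N_R ⊆ G×G (embedded via g |-> (N_R[g])_R) in hat G × hat G. *)
Definition closure_NR {G : Group} {X : Graph} (act : G -> X -> X)
    (I : hrel X -> Prop) (R : hrel X) : hrel (hatG G X) :=
  fun gam del => forall Ts : list (hrel X), (forall T, In T Ts -> I T) ->
    exists g h, NR act R g h /\
      forall T, In T Ts -> NR act T g (gam T) /\ NR act T h (del T).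

Definition cofinite_congruence_hatG {G : Group} {X : Graph} (act : G -> X -> X)
    (I : hrel X -> Prop) (N : hrel (hatG G X)) : Prop :=
  let V := valid_hatG act I in
  (forall a, V a -> N a a) /\
  (forall a b, V a -> V b -> N a b -> N b a) /\
  (forall a b c, V a -> V b -> V c -> N a b -> N b c -> N a c) /\
  (exists reps : list (hatG G X), (forall r, In r reps -> V r) /\
     forall a, V a -> exists r, In r reps /\ N a r) /\
  (forall a b c d, V a -> V b -> V c -> V d -> N a b -> N c d ->
     N (hatmul a c) (hatmul b d)).

Definition fund_system_congr_hatG {G : Group} {X : Graph} (act : G -> X -> X)
    (I : hrel X -> Prop) (Phi : hrel (hatG G X) -> Prop) : Prop :=
  (forall N, Phi N -> cofinite_congruence_hatG act I N) /\
  (exists N, Phi N) /\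
  (forall N1 N2, Phi N1 -> Phi N2 -> exists N3, Phi N3 /\
     forall a b, valid_hatG act I a -> valid_hatG act I b ->
       N3 a b -> N1 a b /\ N2 a b).

Definition equiv_systems_hatG {G : Group} {X : Graph} (act : G -> X -> X)
    (I : hrel X -> Prop) (Phi1 Phi2 : hrel (hatG G X) -> Prop) : Prop :=
  (forall N1, Phi1 N1 -> exists N2, Phi2 N2 /\
     forall a b, valid_hatG act I a -> valid_hatG act I b -> N2 a b -> N1 a b) /\
  (forall N2, Phi2 N2 -> exists N1, Phi1 N1 /\
     forall a b, valid_hatG act I a -> valid_hatG act I b -> N1 a b -> N2 a b).

(* On valid families, both N_{bar R} and the closure of N_R coincide with the
   relation "N_R-related in the R-coordinate": a closure condition involves
   only finitely many coordinates, by directedness of I they can all be read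
   off one coordinate finer than R, and the compatibility of valid families
   carries that coordinate back to R.  So Phi1 and Phi2 are the same family,
   and it is a fundamental system of cofinite congruences because each N_R is
   a cofinite congruence on G: modulo N_R an element is determined by where it
   sends representatives of the finitely many R-classes. *)

From Stdlib Require Import List Classical.
Import ListNotations.

Section Equivalences.
Context {A : Type}.

Lemma equiv_refl {R : hrel A} : is_equiv R -> forall x, R x x.
Proof. intros [Hrefl _]; exact Hrefl. Qed.

Lemma equiv_sym {R : hrel A} : is_equiv R -> forall x y, R x y -> R y x.
Proof. intros [_ [Hsym _]]; exact Hsym. Qed.

Lemma equiv_trans {R : hrel A} : is_equiv R -> forall x y z, R x y -> R y z -> R x z.
Proof. intros [_ [_ Htrans]]; exact Htrans. Qed.

Definition meet_over {B : Type} (L : list B) (K : B -> hrel A) : hrel A :=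
  fun a b => forall l, In l L -> K l a b.

Lemma is_equiv_meet_over {B : Type} (L : list B) (K : B -> hrel A) :
  (forall l, is_equiv (K l)) -> is_equiv (meet_over L K).
Proof.
  intros HK; repeat split.
  - intros a l _; apply equiv_refl, HK.
  - intros a b Hab l Hl; apply (equiv_sym (HK l)), Hab, Hl.
  - intros a b c Hab Hbc l Hl; apply (equiv_trans (HK l) _ b); auto.
Qed.

Lemma finitely_many_classes_sub (E E' : hrel A) :
  subrel E E' -> finitely_many_classes E -> finitely_many_classes E'.
Proof.
  intros HEE' [reps Hreps]; exists reps; intros a.
  destruct (Hreps a) as [r [Hr Har]]; eauto.
Qed.

(* One representative is chosen, classically, for each inhabited code. *)
Lemma finitely_many_classes_of_codes {C : Type} (E : hrel A)
    (code : A -> C -> Prop) (cs : list C) :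
  (forall a, exists c, In c cs /\ code a c) ->
  (forall a b c, code a c -> code b c -> E a b) ->
  finitely_many_classes E.
Proof.
  intros Hcover Hcode.
  assert (Hreps : exists reps : list A,
            forall a c, In c cs -> code a c -> exists r, In r reps /\ E a r).
  { clear Hcover; induction cs as [|c cs IH].
    - exists []; intros a c [].
    - destruct IH as [reps Hreps].
      destruct (classic (exists a0, code a0 c)) as [[a0 Ha0]|Hempty].
      + exists (a0 :: reps); intros a c' [<-|Hc'] Hac'.
        * exists a0; split; [left|eapply Hcode]; eauto.
        * destruct (Hreps a c' Hc' Hac') as [r [Hr Har]]; exists r; split; [right|]; auto.
      + exists reps; intros a c' [<-|Hc'] Hac'.
        * exfalso; eauto.
        * exact (Hreps a c' Hc' Hac'). }
  destruct Hreps as [reps Hreps]; exists reps; intros a.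
  destruct (Hcover a) as [c [Hc Hac]]; exact (Hreps a c Hc Hac).
Qed.

Lemma finitely_many_classes_meet (E1 E2 : hrel A) :
  is_equiv E1 -> is_equiv E2 ->
  finitely_many_classes E1 -> finitely_many_classes E2 ->
  finitely_many_classes (fun a b => E1 a b /\ E2 a b).
Proof.
  intros He1 He2 [reps1 H1] [reps2 H2].
  apply (finitely_many_classes_of_codes _
           (fun a rr => E1 a (fst rr) /\ E2 a (snd rr)) (list_prod reps1 reps2)).
  - intros a; destruct (H1 a) as [r1 [Hr1 Ha1]], (H2 a) as [r2 [Hr2 Ha2]].
    exists (r1, r2); split; [apply in_prod|]; auto.
  - intros a b [r1 r2] [Ha1 Ha2] [Hb1 Hb2]; split.
    + apply (equiv_trans He1 _ r1); [|apply (equiv_sym He1)]; auto.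
    + apply (equiv_trans He2 _ r2); [|apply (equiv_sym He2)]; auto.
Qed.

Lemma finitely_many_classes_meet_over {B : Type} (L : list B) (K : B -> hrel A) :
  (forall l, is_equiv (K l)) -> (forall l, finitely_many_classes (K l)) ->
  finitely_many_classes (meet_over L K).
Proof.
  intros Heq Hfin; induction L as [|l L IH].
  - apply (finitely_many_classes_of_codes _ (fun _ _ => True) [tt]).
    + intros a; exists tt; split; [left|]; auto.
    + intros a b _ _ _ l [].
  - apply (finitely_many_classes_sub (fun a b => K l a b /\ meet_over L K a b)).
    + intros a b [Hl HL] l' [<-|Hl']; auto.
    + apply finitely_many_classes_meet; auto; apply is_equiv_meet_over, Heq.
Qed.

End Equivalences.

Lemma finitely_many_classes_preimage {A B : Type} (f : A -> B) {R : hrel B} :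
  is_equiv R -> finitely_many_classes R ->
  finitely_many_classes (fun a b => R (f a) (f b)).
Proof.
  intros HR [reps Hreps].
  apply (finitely_many_classes_of_codes _ (fun a r => R (f a) r) reps); auto.
  intros a b r Ha Hb; apply (equiv_trans HR _ r); [|apply (equiv_sym HR)]; auto.
Qed.

Lemma is_equiv_preimage {A B : Type} (f : A -> B) {R : hrel B} :
  is_equiv R -> is_equiv (fun a b => R (f a) (f b)).
Proof.
  intros HR; repeat split.
  - intros a; apply (equiv_refl HR).
  - intros a b; apply (equiv_sym HR).
  - intros a b c; apply (equiv_trans HR).
Qed.

Lemma directed_list {A : Type} {I : hrel A -> Prop} :
  (forall R1 R2, I R1 -> I R2 -> exists S, I S /\ subrel S R1 /\ subrel S R2) ->
  forall Ts, (forall T, In T Ts -> I T) -> forall R, I R ->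
    exists S, I S /\ subrel S R /\ forall T, In T Ts -> subrel S T.
Proof.
  intros Hdir; induction Ts as [|T Ts IH]; intros HTs R HR.
  - exists R; split; [exact HR | split; [intros x y Hxy; exact Hxy | intros T []]].
  - destruct (IH (fun T' H => HTs T' (or_intror H)) R HR) as [S' [HS' [HS'R HS'Ts]]].
    destruct (Hdir S' T HS' (HTs T (or_introl eq_refl))) as [S [HS [HSS' HST]]].
    exists S; repeat split; auto.
    + intros x y Hxy; apply HS'R, HSS', Hxy.
    + intros T' [<-|HT'] x y Hxy; auto; apply (HS'Ts T' HT'), HSS', Hxy.
Qed.

Section Congruences.
Context {G : Group} {X : Graph} (act : G -> X -> X).
Hypothesis act_mul : forall g h x, act (gmul g h) x = act g (act h x).

Lemma is_equiv_NR {R : hrel X} : is_equiv R -> is_equiv (NR act R).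
Proof.
  intros HR; repeat split.
  - intros g x; apply (equiv_refl HR).
  - intros g h Hgh x; apply (equiv_sym HR), Hgh.
  - intros g h k Hgh Hhk x; apply (equiv_trans HR _ (act h x)); auto.
Qed.

Lemma NR_mul (R : hrel X) g g' h h' : is_equiv R -> G_invariant act R ->
  NR act R g g' -> NR act R h h' -> NR act R (gmul g h) (gmul g' h').
Proof.
  intros HR Hinv Hg Hh x; rewrite !act_mul.
  apply (equiv_trans HR _ (act g (act h' x))); [apply Hinv, Hh | apply Hg].
Qed.

Lemma NR_of_reps (R : hrel X) (reps : list X) :
  is_equiv R -> G_invariant act R -> (forall x, exists r, In r reps /\ R x r) ->
  subrel (meet_over reps (fun r g h => R (act g r) (act h r))) (NR act R).
Proof.
  intros HR Hinv Hreps g h Hgh x.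
  destruct (Hreps x) as [r [Hr Hxr]].
  apply (equiv_trans HR _ (act g r)); [apply Hinv, Hxr|].
  apply (equiv_trans HR _ (act h r)); [apply Hgh, Hr|].
  apply Hinv, (equiv_sym HR), Hxr.
Qed.

Lemma finitely_many_classes_NR (R : hrel X) :
  is_equiv R -> G_invariant act R -> finitely_many_classes R ->
  finitely_many_classes (NR act R).
Proof.
  intros HR Hinv Hfin; pose proof Hfin as [reps Hreps].
  apply (finitely_many_classes_sub _ _ (NR_of_reps R reps HR Hinv Hreps)).
  apply finitely_many_classes_meet_over; intros r.
  - exact (is_equiv_preimage (fun g => act g r) HR).
  - exact (finitely_many_classes_preimage (fun g => act g r) HR Hfin).
Qed.

End Congruences.

Section Completion.
Context {G : Group} {X : Graph} (act : G -> X -> X) (I : hrel X -> Prop).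
Hypothesis act_mul : forall g h x, act (gmul g h) x = act g (act h x).
Hypothesis I_equiv : forall {R}, I R -> is_equiv R.
Hypothesis I_invariant : forall {R}, I R -> G_invariant act R.
Hypothesis I_finite : forall {R}, I R -> finitely_many_classes R.
Hypothesis I_directed :
  forall {R1 R2}, I R1 -> I R2 -> exists S, I S /\ subrel S R1 /\ subrel S R2.

Local Notation valid := (valid_hatG act I).

Definition coord_congr (R : hrel X) : hrel (hatG G X) :=
  fun a b => NR act R (a R) (b R).

Lemma valid_hatact {a xi} :
  valid a -> valid_hatGamma I xi -> valid_hatGamma I (hatact act a xi).
Proof.
  intros Ha Hxi S T HS HT HST; unfold hatact.
  apply (equiv_trans (I_equiv HT) _ (act (a S) (xi T))).
  - apply I_invariant, Hxi; auto.
  - apply Ha; auto.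
Qed.

Lemma valid_hatmul a b : valid a -> valid b -> valid (hatmul a b).
Proof.
  intros Ha Hb S T HS HT HST; apply NR_mul; auto.
Qed.

Lemma valid_const g : valid (fun _ => g).
Proof. intros S T _ HT _; exact (equiv_refl (is_equiv_NR act (I_equiv HT)) g). Qed.

Lemma coord_congr_mono S R a b : I S -> I R -> subrel S R ->
  valid a -> valid b -> coord_congr S a b -> coord_congr R a b.
Proof.
  intros HS HR HSR Ha Hb Hab; pose proof (is_equiv_NR act (I_equiv HR)) as HN.
  apply (equiv_trans HN _ (a S)); [apply (equiv_sym HN), Ha; auto|].
  apply (equiv_trans HN _ (b S)); [intros x; apply HSR, Hab | apply Hb; auto].
Qed.

Lemma closure_NR_coord R a b : I R -> valid a -> valid b ->
  closure_NR act I R a b <-> coord_congr R a b.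
Proof.
  intros HR Ha Hb; pose proof (is_equiv_NR act (I_equiv HR)) as HN; split.
  - intros Hcl; destruct (Hcl [R]) as [g [h [Hgh Hcoord]]].
    { intros T [<-|[]]; exact HR. }
    destruct (Hcoord R (or_introl eq_refl)) as [Hg Hh].
    apply (equiv_trans HN _ g); [apply (equiv_sym HN); auto|].
    apply (equiv_trans HN _ h); auto.
  - intros Hab Ts HTs.
    destruct (directed_list (@I_directed) Ts HTs R HR) as [S [HS [HSR HSTs]]].
    exists (a S), (b S); split.
    + apply (equiv_trans HN _ (a R)); [apply Ha; auto|].
      apply (equiv_trans HN _ (b R)); [exact Hab | apply (equiv_sym HN), Hb; auto].
    + intros T HT; split; [apply Ha | apply Hb]; auto.
Qed.

Lemma N_Rbar_coord R a b : I R -> valid a -> valid b ->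
  N_Rbar act I R a b <-> coord_congr R a b.
Proof.
  intros HR Ha Hb; pose proof (I_equiv HR) as HRe; split.
  - intros Hcl x.
    assert (Hx : valid_hatGamma I (fun _ => x)).
    { intros S T _ HT _; apply (equiv_refl (I_equiv HT)). }
    destruct (Hcl _ Hx [R]) as [x' [y' [Hxy Hcoord]]].
    { intros T [<-|[]]; exact HR. }
    destruct (Hcoord R (or_introl eq_refl)) as [Hx' Hy']; unfold hatact in Hx', Hy'.
    apply (equiv_trans HRe _ x'); [apply (equiv_sym HRe); auto|].
    apply (equiv_trans HRe _ y'); auto.
  - intros Hab xi Hxi Ts HTs.
    destruct (directed_list (@I_directed) Ts HTs R HR) as [S [HS [HSR HSTs]]].
    pose proof (valid_hatact Ha Hxi) as Haxi; pose proof (valid_hatact Hb Hxi) as Hbxi.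
    exists (hatact act a xi S), (hatact act b xi S); split.
    + apply (equiv_trans HRe _ (hatact act a xi R)); [apply Haxi; auto|].
      apply (equiv_trans HRe _ (hatact act b xi R)); [apply Hab|].
      apply (equiv_sym HRe), Hbxi; auto.
    + intros T HT; split; [apply Haxi | apply Hbxi]; auto.
Qed.

Lemma cofinite_congruence_coord R : I R -> cofinite_congruence_hatG act I (coord_congr R).
Proof.
  intros HR; pose proof (I_equiv HR) as HRe; pose proof (is_equiv_NR act HRe) as HN.
  repeat split.
  - intros a _; apply (equiv_refl HN).
  - intros a b _ _; apply (equiv_sym HN).
  - intros a b c _ _ _; apply (equiv_trans HN).
  - destruct (finitely_many_classes_NR act R HRe (I_invariant HR) (I_finite HR))
      as [gs Hgs].
    exists (map (fun g _ => g) gs); split.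
    + intros r Hr; apply in_map_iff in Hr; destruct Hr as [g [<- _]]; apply valid_const.
    + intros a _; destruct (Hgs (a R)) as [g [Hg Hag]].
      exists (fun _ => g); split; auto; apply in_map_iff; eauto.
  - intros a b c d _ _ _ _; apply NR_mul; auto.
Qed.

Lemma cofinite_congruence_transfer (N N' : hrel (hatG G X)) :
  (forall a b, valid a -> valid b -> N a b <-> N' a b) ->
  cofinite_congruence_hatG act I N' -> cofinite_congruence_hatG act I N.
Proof.
  intros HNN' [Hrefl [Hsym [Htrans [[reps [Hreps Hcover]] Hmul]]]].
  repeat split.
  - intros a Ha; apply HNN'; auto.
  - intros a b Ha Hb Hab; apply HNN', Hsym, HNN'; auto.
  - intros a b c Ha Hb Hc Hab Hbc; apply HNN'; auto.
    apply (Htrans a b c); auto; apply HNN'; auto.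
  - exists reps; split; auto; intros a Ha.
    destruct (Hcover a Ha) as [r [Hr Har]]; exists r; split; auto; apply HNN'; auto.
  - intros a b c d Ha Hb Hc Hd Hab Hcd.
    apply HNN'; try apply valid_hatmul; auto; apply Hmul; auto; apply HNN'; auto.
Qed.

Section CoordinateFamily.
Variable F : hrel X -> hrel (hatG G X).
Hypothesis F_coord : forall R a b, I R -> valid a -> valid b -> F R a b <-> coord_congr R a b.

Lemma fund_system_coord :
  (exists R, I R) -> fund_system_congr_hatG act I (fun N => exists R, I R /\ N = F R).
Proof.
  intros [R0 HR0]; split; [|split].
  - intros N [R [HR ->]].
    apply (cofinite_congruence_transfer _ (coord_congr R)); auto.
    apply cofinite_congruence_coord, HR.
  - exists (F R0); eauto.
  - intros N1 N2 [R1 [HR1 ->]] [R2 [HR2 ->]].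
    destruct (I_directed HR1 HR2) as [S [HS [HS1 HS2]]].
    exists (F S); split; eauto.
    intros a b Ha Hb Hab; apply F_coord in Hab; auto.
    split; apply F_coord; auto; apply (coord_congr_mono S); auto.
Qed.

Lemma equiv_systems_coord (F' : hrel X -> hrel (hatG G X)) :
  (forall R a b, I R -> valid a -> valid b -> F' R a b <-> coord_congr R a b) ->
  equiv_systems_hatG act I (fun N => exists R, I R /\ N = F R)
                           (fun N => exists R, I R /\ N = F' R).
Proof.
  intros F'_coord; split; intros N [R [HR ->]].
  - exists (F' R); split; eauto; intros a b Ha Hb Hab.
    apply F_coord, F'_coord; auto.
  - exists (F R); split; eauto; intros a b Ha Hb Hab.
    apply F'_coord, F_coord; auto.
Qed.

End CoordinateFamily.

End Completion.

Lemma inv_fund_system_directed {G : Group} {X : Graph} {U : hrel X -> Prop}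
    {act : G -> X -> X} {I : hrel X -> Prop} :
  is_uniformity U -> inv_fund_system U act I ->
  forall R1 R2, I R1 -> I R2 -> exists S, I S /\ subrel S R1 /\ subrel S R2.
Proof.
  intros [_ [_ [Hmeet _]]] [HI Hfund] R1 R2 HR1 HR2.
  destruct (Hfund _ (Hmeet _ _ (proj1 (proj1 (HI R1 HR1))) (proj1 (proj1 (HI R2 HR2)))))
    as [S [HS HSsub]].
  exists S; repeat split; auto; intros x y Hxy; apply (HSsub x y Hxy).
Qed.

Theorem mainTheorem9 (G : Group) (X : Graph) (U : hrel X -> Prop)
    (act : G -> X -> X) (I : hrel X -> Prop)
    (hX : cofinite_graph U)
    (hact : graph_action act)
    (hfaith : faithful_action act)
    (hequi : unif_equicontinuous U act)
    (hI : inv_fund_system U act I) :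
  let Phi1 := fun N => exists R, I R /\ N = N_Rbar act I R in
  let Phi2 := fun N => exists R, I R /\ N = closure_NR act I R in
  fund_system_congr_hatG act I Phi1 /\
  fund_system_congr_hatG act I Phi2 /\
  equiv_systems_hatG act I Phi1 Phi2.
Proof.
  cbv zeta.
  destruct hX as [HU _].
  pose proof (inv_fund_system_directed HU hI) as I_directed.
  destruct hact as [_ [act_mul _]].
  destruct hI as [HI Hfund].
  assert (I_equiv : forall R, I R -> is_equiv R) by (intros R HR; apply (HI R HR)).
  assert (I_invariant : forall R, I R -> G_invariant act R) by (intros R HR; apply (HI R HR)).
  assert (I_finite : forall R, I R -> finitely_many_classes R) by (intros R HR; apply (HI R HR)).
  assert (I_inhabited : exists R, I R).
  { destruct HU as [[W HW] _]; destruct (Hfund W HW) as [R [HR _]]; eauto. }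
  pose proof (N_Rbar_coord act I I_equiv I_invariant I_directed) as Phi1_coord.
  pose proof (closure_NR_coord act I I_equiv I_directed) as Phi2_coord.
  split; [|split].
  - exact (fund_system_coord act I act_mul I_equiv I_invariant I_finite I_directed
             _ Phi1_coord I_inhabited).
  - exact (fund_system_coord act I act_mul I_equiv I_invariant I_finite I_directed
             _ Phi2_coord I_inhabited).
  - exact (equiv_systems_coord act I _ Phi1_coord _ Phi2_coord).
Qed.
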